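(* Let $S$ be a meet semilattice and let $2\leq k\leq\omega$. The following are equivalent: (1) $\exists$ has an $\omega$-strategy in the $(m,k)$-game on $S$ with starting position $(\{a\},\{b\})$ for all $a,b\in S$ with $a\not\leq b$ and for all $2\leq m\leq\omega$; (2) $\exists$ has a $5$-strategy in the $(3,k)$-game on $S$ with starting position $(\{a\},\{b\})$ for all $a,b\in S$ with $a\not\leq b$; (3) $S$ is $k$-distributive.
   Context: Work in ZFC. A meet semilattice $S$ is regarded as a poset. $S$ is $k$-distributive if for all $m<k$ and all $x,y_1,\ldots,y_m\in S$, whenever $x\wedge(y_1\vee\cdots\vee y_m)$ exists in $S$, then $(x\wedge y_1)\vee\cdots\vee(x\wedge y_m)$ also exists in $S$ and the two are equal. For a poset $P$, $2\leq\alpha,\beta\leq\omega$ and $U_0,V\subseteq P$, the $(\alpha,\beta)$-game with starting position $(U_0,V)$ is played between $\forall$ and $\exists$ in rounds $0,1,2,\ldots$; a set $U$ is maintained, initially $U_0$, with $V$ fixed. Each round $\forall$ moves and $\exists$ responds: (1) if $b\geq a$ for some $a\in U$, $\forall$ may play $(b)$ and $\exists$ must add $b$ to $U$; (2) if $A\subseteq U$ with $|A|<\alpha$ and $\bigwedge A$ exists in $P$, $\forall$ may play $A$ and $\exists$ must add $\bigwedge A$ to $U$; (3) if $B\subseteq P$ with $|B|<\beta$ and $\bigvee B$ exists in $P$ and lies in $U$, $\forall$ may play $B$ and $\exists$ must choose some $b\in B$ and add it to $U$. $\forall$ wins in round $n$ if $U\cap V\neq\emptyset$ at the beginning of round $n$.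 $\exists$ has an $n$-strategy if she can guarantee that $\forall$ does not win until at least round $n+1$, and an $\omega$-strategy if she can guarantee that $\forall$ never wins. *)

From mathcomp Require Import all_boot all_order.
Set Implicit Arguments. Unset Strict Implicit. Unset Printing Implicit Defensive.
Import Order.Theory.
Local Open Scope order_scope.

Inductive cardw : Type := fin of nat | omega.

Definition two_le (a : cardw) : Prop :=
  match a with fin n => (2 <= n)%N | omega => True end.

Definition nat_lt_cardw (n : nat) (a : cardw) : Prop :=
  match a with fin k => (n < k)%N | omega => True end.

Definition card_lt (T : eqType) (A : T -> Prop) (a : cardw) : Prop :=
  exists s : seq T, uniq s /\ (forall x, A x <-> x \in s) /\ nat_lt_cardw (size s) a.

Section Poset.
Context {d : Order.disp_t} {P : porderType d}.

Definition is_glb (A : P -> Prop) (g : P) : Prop :=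
  (forall x, A x -> g <= x) /\ (forall y, (forall x, A x -> y <= x) -> y <= g).

Definition is_lub (B : P -> Prop) (j : P) : Prop :=
  (forall x, B x -> x <= j) /\ (forall y, (forall x, B x -> x <= y) -> j <= y).

Definition add (U : P -> Prop) (x : P) : P -> Prop := fun y => U y \/ y = x.

Definition disjoint (U V : P -> Prop) : Prop := forall x, U x -> ~ V x.

(* One round of the (alpha,beta)-game at position U: for every legal move of
   forall, exists has a response leading to a position satisfying W. *)
Definition round_ok (alpha beta : cardw) (U : P -> Prop) (W : (P -> Prop) -> Prop)
  : Prop :=
  (forall a b, U a -> a <= b -> W (add U b)) /\
  (forall (A : P -> Prop) g, (forall x, A x -> U x) -> card_lt A alpha ->
      is_glb A g -> W (add U g)) /\
  (forall (B : P -> Prop) j, card_lt B beta -> is_lub B j -> U j ->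
      exists b, B b /\ W (add U b)).

(* exists has an n-strategy in the (alpha,beta)-game from position (U,V):
   forall does not win before round n+1 (U meets V at the start of no round
   0..n), whatever forall plays. *)
Fixpoint has_nstrat (alpha beta : cardw) (V : P -> Prop) (n : nat) (U : P -> Prop)
  : Prop :=
  disjoint U V /\
  match n with
  | 0 => True
  | n'.+1 => round_ok alpha beta U (has_nstrat alpha beta V n')
  end.

(* exists has an omega-strategy from (U0,V): there is a family W of positions
   containing U0, all disjoint from V, such that from any position in W
   exists can answer every move of forall staying in W. *)
Definition has_wstrat (alpha beta : cardw) (V : P -> Prop) (U0 : P -> Prop) : Prop :=
  exists W : (P -> Prop) -> Prop, W U0 /\
    forall U, W U -> disjoint U V /\ round_ok alpha beta U W.

End Poset.

Definition k_distributive {d : Order.disp_t} (S : meetSemilatticeType d)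
  (k : cardw) : Prop :=
  forall (ys : seq S), nat_lt_cardw (size ys) k ->
  forall (x z : S), is_lub (fun y => y \in ys) z ->
    is_lub (fun w => exists2 y, y \in ys & w = x `&` y) (x `&` z).

From Pilot Require Import Defs.
From mathcomp Require Import all_boot all_order.
From Stdlib Require Import Classical.
Import Order.Theory.
Local Open Scope order_scope.

(* (3) => (1): exists keeps b outside the filter generated by the position U,
   i.e. no meet of a with finitely many elements of U lies below b. Moves of
   kind (1) and (2) preserve this at once. For a move (3) with finite B and
   join j in U, if every choice c in B broke the invariant, a single finite
   meet x <= j of elements of U would satisfy x `&` c <= b for all c in B, and
   k-distributivity would give x = x `&` j <= b.
   (2) => (3): if x `&` z is not below an upper bound w of all x `&` y, where
   z is the join of ys, forall wins from ({x `&` z}, {w}) in four rounds by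
   playing z, then ys, then the meet of x `&` z with the y chosen by exists,
   and finally w. *)

Lemma nat_lt_cardw_le n n' (c : cardw) :
  (n <= n')%N -> nat_lt_cardw n' c -> nat_lt_cardw n c.
Proof. by case: c => //= k; apply: leq_ltn_trans. Qed.

Lemma card_lt_mem {T : eqType} {s : seq T} {c : cardw} :
  nat_lt_cardw (size s) c -> card_lt (fun t => t \in s) c.
Proof.
move=> lt_s_c; exists (undup s); split; first exact: undup_uniq.
split; first by move=> t; rewrite mem_undup.
exact: nat_lt_cardw_le (size_undup s) lt_s_c.
Qed.

Section Strategies.
Context {d : Order.disp_t} {P : porderType d}.
Variables (alpha beta : cardw) (V : P -> Prop).

Lemma round_ok_mono (U : P -> Prop) (W W' : (P -> Prop) -> Prop) :
  (forall U', W U' -> W' U') -> round_ok alpha beta U W -> round_ok alpha beta U W'.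
Proof.
move=> sub_WW' [up [glb lub]]; split; last split.
- by move=> x y Ux le_xy; apply/sub_WW'/(up x).
- by move=> A g sub_AU card_A glb_g; apply/sub_WW'/(glb A).
- move=> B j card_B lub_j Uj; have [c [Bc Wc]] := lub B j card_B lub_j Uj.
  by exists c; split => //; apply: sub_WW'.
Qed.

Lemma has_nstrat_disjoint n (U : P -> Prop) :
  has_nstrat alpha beta V n U -> Defs.disjoint U V.
Proof. by case: n => [|n] []. Qed.

Lemma has_wstrat_nstrat (U0 : P -> Prop) n :
  has_wstrat alpha beta V U0 -> has_nstrat alpha beta V n U0.
Proof.
case=> W [W_U0 W_closed]; elim: n U0 W_U0 => [|n IHn] U W_U /=;
  have [dis_UV round_U] := W_closed U W_U; split => //.
exact: round_ok_mono round_U.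
Qed.

End Strategies.

Section MeetSemilattice.
Context {d : Order.disp_t} {S : meetSemilatticeType d}.

Definition meets (a : S) (s : seq S) : S := foldr Order.meet a s.

Lemma le_meets (y a : S) s :
  (y <= meets a s) = (y <= a) && all (fun t => y <= t) s.
Proof. by elim: s => [|t s IHs] /=; rewrite ?andbT // lexI IHs andbCA. Qed.

Lemma meets_le_seed a s : meets a s <= a.
Proof. by move: (le_refl (meets a s)); rewrite {1}le_meets => /andP[]. Qed.

Lemma meets_le_mem a s t : t \in s -> meets a s <= t.
Proof.
by move: (le_refl (meets a s)); rewrite {1}le_meets => /andP[_ /allP]; apply.
Qed.

Lemma meets_greatest (y a : S) s :
  y <= a -> (forall t, t \in s -> y <= t) -> y <= meets a s.
Proof. by move=> le_ya le_ys; rewrite le_meets le_ya; apply/allP. Qed.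

Lemma meets_subset a s s' : {subset s <= s'} -> meets a s' <= meets a s.
Proof.
move=> sub_ss'; apply: meets_greatest => [|t /sub_ss']; first exact: meets_le_seed.
exact: meets_le_mem.
Qed.

Lemma is_glb_meets a s : is_glb (fun t => t \in a :: s) (meets a s).
Proof.
split=> [t|y lb_y].
  by rewrite inE => /predU1P[->|]; [apply: meets_le_seed | apply: meets_le_mem].
by apply: meets_greatest => [|t ts]; apply: lb_y; rewrite inE ?eqxx ?ts ?orbT.
Qed.

Section Avoids.
Variables (a b : S).

(* S may lack a top, so every finite meet is seeded with a; this is harmless
   since a belongs to every position reached from {a}. *)
Definition avoids (U : S -> Prop) : Prop :=
  forall s : seq S, (forall u, u \in s -> U u) -> ~~ (meets a s <= b).

Lemma avoids_add_meet U c :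
  (forall r, (forall u, u \in r -> U u) -> ~~ (c `&` meets a r <= b)) ->
  avoids (add U c).
Proof.
move=> avoid_c s sub_s; pose r := filter (predC1 c) s.
have sub_r : forall u, u \in r -> U u.
  move=> u; rewrite mem_filter => /andP[ne_uc /sub_s[] // eq_uc].
  by rewrite /= eq_uc eqxx in ne_uc.
apply: contra (avoid_c r sub_r) => /(le_trans _); apply.
apply: meets_greatest => [|t ts]; first exact: le_trans (leIr _ _) (meets_le_seed _ _).
have [->|ne_tc] := eqVneq t c; first exact: leIl.
apply: le_trans (leIr _ _) _; apply: meets_le_mem.
by rewrite mem_filter /= ne_tc ts.
Qed.

Lemma avoids_witness U c : ~ avoids (add U c) ->
  exists r, (forall u, u \in r -> U u) /\ c `&` meets a r <= b.
Proof.
move=> not_avoid; apply: NNPP => no_r; apply/not_avoid/avoids_add_meet => r sub_r.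
by apply/negP => le_b; apply: no_r; exists r.
Qed.

Lemma avoids_common_witness {U} {cs : seq S} :
  (forall c, c \in cs ->
     exists r, (forall u, u \in r -> U u) /\ c `&` meets a r <= b) ->
  exists r, (forall u, u \in r -> U u) /\
    forall c, c \in cs -> c `&` meets a r <= b.
Proof.
elim: cs => [|c cs IHcs] wit; first by exists [::].
have [r [sub_r le_c]] := wit c (mem_head _ _).
have [t [sub_t le_cs]] :=
  IHcs (fun c' c'_cs => wit c' (mem_behead (s := c :: cs) c'_cs)).
have meet_mono c' s :
    {subset s <= r ++ t} -> c' `&` meets a (r ++ t) <= c' `&` meets a s.
  by move=> sub_s; apply/leI2/meets_subset.
exists (r ++ t); split=> [u|c']; first by rewrite mem_cat => /orP[/sub_r|/sub_t].
rewrite inE => /predU1P[->|c'_cs].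
  by apply: le_trans (meet_mono c r _) le_c => u ur; rewrite mem_cat ur.
apply: le_trans (meet_mono c' t _) (le_cs c' c'_cs) => u ut.
by rewrite mem_cat ut orbT.
Qed.

Lemma avoids_seed : ~~ (a <= b) -> avoids (fun x => x = a).
Proof.
move=> nle_ab s sub_s; apply: contra nle_ab => /(le_trans _); apply.
by apply: meets_greatest => // t /sub_s ->.
Qed.

Lemma avoids_disjoint U : avoids U -> Defs.disjoint U (fun x => x = b).
Proof.
move=> avoid_U x Ux xb.
have sub_x : forall u, u \in [:: x] -> U u by move=> u /[!inE] /eqP ->.
by have := avoid_U _ sub_x; rewrite /= -xb leIl.
Qed.

Lemma avoids_add_ge U x y : avoids U -> U x -> x <= y -> avoids (add U y).
Proof.
move=> avoid_U Ux le_xy; apply: avoids_add_meet => r sub_r.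
apply: contra (avoid_U (x :: r) _) => [/(le_trans _)|]; last first.
  by move=> u /predU1P[->|/sub_r].
by apply; apply: leI2.
Qed.

Lemma avoids_add_glb (m : cardw) U A g :
  avoids U -> (forall x, A x -> U x) -> card_lt A m -> is_glb A g ->
  avoids (add U g).
Proof.
move=> avoid_U sub_AU [sA [_ [mem_sA _]]] [_ glb_g]; apply: avoids_add_meet => r sub_r.
apply: contra (avoid_U (sA ++ r) _) => [/(le_trans _)|]; last first.
  by move=> u; rewrite mem_cat => /orP[/mem_sA/sub_AU|/sub_r].
apply; rewrite lexI; apply/andP; split.
  by apply: glb_g => x /mem_sA Ax; apply: meets_le_mem; rewrite mem_cat Ax.
by apply: meets_subset => u ur; rewrite mem_cat ur orbT.
Qed.

Lemma avoids_add_join (k : cardw) U B j :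
  k_distributive S k -> avoids U -> card_lt B k -> is_lub B j -> U j ->
  exists c, B c /\ avoids (add U c).
Proof.
move=> distr avoid_U [sB [_ [mem_sB size_sB]]] [ub_j lub_j] Uj.
apply: NNPP => no_c.
have wit c : c \in sB ->
    exists r, (forall u, u \in r -> U u) /\ c `&` meets a r <= b.
  by move=> /mem_sB Bc; apply: avoids_witness => avoid_c; apply: no_c; exists c.
have [t [sub_t le_t]] := avoids_common_witness wit.
pose x := meets a (j :: t).
have lub_sB : is_lub (fun y => y \in sB) j.
  by split=> [y /mem_sB /ub_j | y ub_y] //; apply: lub_j => c /mem_sB /ub_y.
have x_le_j : x <= j by apply: meets_le_mem; rewrite mem_head.
have : x `&` j <= b.
  apply: (distr sB size_sB x j lub_sB).2 => _ [c c_sB ->].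
  apply: le_trans (le_t c c_sB); rewrite meetC; apply: leI2 => //.
  by apply: meets_subset => u ut; rewrite inE ut orbT.
rewrite (meet_l x_le_j); apply/negP/avoid_U.
by move=> u /predU1P[->|/sub_t].
Qed.

Lemma distributive_wstrat (k m : cardw) :
  k_distributive S k -> ~~ (a <= b) ->
  has_wstrat m k (fun x => x = b) (fun x => x = a).
Proof.
move=> distr nle_ab; exists avoids; split; first exact: avoids_seed.
move=> U avoid_U; split; first exact: avoids_disjoint.
split; last split.
- by move=> x y; apply: avoids_add_ge.
- by move=> A g; apply: avoids_add_glb.
- by move=> B j; apply: avoids_add_join distr avoid_U.
Qed.

End Avoids.
End MeetSemilattice.

Lemma nstrat_distributive d (S : meetSemilatticeType d) (m k : cardw) n :
  nat_lt_cardw 2 m ->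
  (forall a b : S, ~~ (a <= b) ->
     has_nstrat m k (fun x => x = b) n.+4 (fun x => x = a)) ->
  k_distributive S k.
Proof.
move=> m_gt2 strat ys size_ys x z [ub_z lub_z]; split.
  by move=> _ [y y_ys ->]; apply/leI2/ub_z.
move=> w ub_w; apply: contraT => nle; set a := x `&` z in nle.
have [play_up _] := (strat a w nle).2.
have [_ [_ play_join]] := (play_up a z erefl (leIr z x)).2.
have [y [y_ys [_ [_ [play_meet _]]]]] :=
  play_join _ z (card_lt_mem size_ys) (conj ub_z lub_z) (or_intror erefl).
have sub_ya : forall t, t \in [:: y; a] ->
    add (add (fun t => t = a) z) y t.
  by move=> t /[!inE] /orP[/eqP->|/eqP->]; [right | left; left].
have [play_up' _] :=
  (play_meet _ _ sub_ya (card_lt_mem (s := [:: y; a]) m_gt2) (is_glb_meets y [:: a])).2.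
have le_w : meets y [:: a] <= w.
  apply: le_trans (ub_w (x `&` y) _); last by exists y.
  by apply: leI2 => //; apply: leIl.
have /has_nstrat_disjoint disj := play_up' _ w (or_intror erefl) le_w.
by case: (disj w (or_intror erefl) erefl).
Qed.

Theorem proposition6p2 (d : Order.disp_t) (S : meetSemilatticeType d) (k : cardw) :
  two_le k ->
  let P1 := forall a b : S, ~~ (a <= b) -> forall m : cardw, two_le m ->
              has_wstrat m k (fun x => x = b) (fun x => x = a) in
  let P2 := forall a b : S, ~~ (a <= b) ->
              has_nstrat (fin 3) k (fun x => x = b) 5 (fun x => x = a) in
  let P3 := k_distributive S k in
  (P1 <-> P2) /\ (P2 <-> P3).
Proof.
move=> _ P1 P2 P3.
have P12 : P1 -> P2.
  by move=> wstrat a b nle_ab; apply/has_wstrat_nstrat/wstrat.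
have P23 : P2 -> P3 by apply: (@nstrat_distributive _ _ (fin 3) k 1).
have P31 : P3 -> P1.
  by move=> distr a b nle_ab m _; apply: distributive_wstrat.
split; split=> //.
- by move=> strat; exact: P31 (P23 strat).
- by move=> distr; exact: P12 (P31 distr).
Qed.
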